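(* Let $\gamma=(\gamma_1,\dots,\gamma_b)$ be a parallel map on $V=V_1\oplus\cdots\oplus V_b$, $V_i\cong(\mathbb F_2)^m$, with $0\gamma=0$. Suppose every $\gamma_i$ is differentially $2^r$-uniform with $r<m-1$ and strongly $r$-anti-invariant. If $\gamma$ maps $\mathcal L(W)$ onto a non-trivial partition $\mathcal{LA}_U(W_1|W_2)$, then $W$, $W_1$, $W_2$ are walls and $W=W_1=W_2$; in particular $\mathcal{LA}_U(W_1|W_2)$ is linear.
   Context: Let $m,b>1$, $n=mb$, $V=(\mathbb F_2)^n=V_1\oplus\cdots\oplus V_b$, $V_i\cong(\mathbb F_2)^m$. Permutations act on the right. A parallel map is $\gamma\in\mathrm{Sym}(V)$ with $(v_1\oplus\cdots\oplus v_b)\gamma=v_1\gamma_1\oplus\cdots\oplus v_b\gamma_b$, $\gamma_i\in\mathrm{Sym}(V_i)$ (S-boxes). A wall is $\bigoplus_{i\in I}V_i$ with $\emptyset\ne I\subsetneq\{1,\dots,b\}$. For $f:(\mathbb F_2)^m\to(\mathbb F_2)^m$, $f$ is differentially $\delta$-uniform if $\delta=\max_{a\ne0,b}|\{x:f(x+a)+f(x)=b\}|$; with $f(0)=0$ and $1\le r<m$, $f$ is strongly $r$-anti-invariant if for all subspaces $U,W$ with $f(U)=W$, either $\dim U=\dim W<m-r$ or $U=W=(\mathbb F_2)^m$. A permutation maps a partition $\mathcal A$ onto $\mathcal B$ if it sends the blocks of $\mathcal A$ exactly onto the blocks of $\mathcal B$; a partition is trivial if it is the partition into singletons or $\{V\}$.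 $\mathcal L(W)=\{W+v:v\in V\}$ for a subspace $W$ (linear partition). For a subspace $U$ of dimension $n-1$ and subspaces $W_1,W_2\subseteq U$, $\mathcal{LA}_U(W_1|W_2)=\{W_1+v:v\in U\}\cup\{(W_2+\bar v)+v:v\in U\}$ for any $\bar v\in V\setminus U$. *)

From HB Require Import structures.
From mathcomp Require Import all_boot all_order all_algebra.
From mathcomp Require Import perm.
Set Implicit Arguments. Unset Strict Implicit. Unset Printing Implicit Defensive.
Import GRing.Theory.
Local Open Scope ring_scope.

(* An S-box space (F_2)^m is 'rV['F_2]_m; the whole space
   V = V_1 (+) ... (+) V_b is 'M['F_2]_(b, m), row i being the component in V_i. *)
Notation sbox m := 'rV['F_2]_m.
Notation space b m := 'M['F_2]_(b, m).

Section Defs.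
Variables (b m : nat).

Definition parallel (g : 'I_b -> {perm sbox m}) (v : space b m) : space b m :=
  \matrix_i (g i (row i v)).

Definition svset (W : {vspace space b m}) : {set space b m} :=
  [set x | x \in W].

Definition coset (W : {vspace space b m}) (v : space b m) : {set space b m} :=
  [set x + v | x in svset W].

Definition linpart (W : {vspace space b m}) : {set {set space b m}} :=
  [set coset W v | v : space b m].

(* LA_U(W1|W2), with vbar a given vector outside U *)
Definition LApart (U W1 W2 : {vspace space b m}) (vbar : space b m)
  : {set {set space b m}} :=
  [set coset W1 v | v in svset U] :|: [set coset W2 (vbar + v) | v in svset U].

(* wall: direct sum of the V_i for i in I, I nonempty and proper *)
Definition wall (W : {vspace space b m}) : Prop :=
  exists I : {set 'I_b}, [/\ I != set0, I != setT &
    forall v : space b m, (v \in W) = [forall i, (i \notin I) ==> (row i v == 0)]].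

Definition trivial_partition (P : {set {set space b m}}) : Prop :=
  P = [set [set x] | x : space b m] \/ P = [set setT].

Definition maps_onto (f : space b m -> space b m) (P Q : {set {set space b m}}) : Prop :=
  [set f @: (B : {set space b m}) | B in P] = Q.
End Defs.

Section Sbox.
Variable m : nat.

Definition diff_count (f : sbox m -> sbox m) (a c : sbox m) : nat :=
  #|[set x : sbox m | f (x + a) + f x == c]|.

Definition diff_uniform (f : sbox m -> sbox m) (delta : nat) : Prop :=
  delta = (\max_(a : sbox m | a != 0%R) \max_(c : sbox m) diff_count f a c)%N.

Definition rvset (W : {vspace sbox m}) : {set sbox m} := [set x | x \in W].

Definition strongly_anti_invariant (f : sbox m -> sbox m) (r : nat) : Prop :=
  [/\ f 0 = 0, (1 <= r)%N, (r < m)%N &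
    forall U W : {vspace sbox m}, f @: rvset U = rvset W ->
      (\dim U = \dim W /\ (\dim W < m - r)%N) \/ (U = fullv /\ W = fullv)].
End Sbox.

(* Since W2 <= U and vbar is outside the hyperplane U, a block of L(W) whose
   image meets U is mapped onto a coset of W1: so gamma(W) = W1, and
   gamma(v + w) - gamma(v) lies in W1 whenever gamma(v) is in U and w in W.
   If some w in W has a nonzero i-th component a, differential uniformity
   prevents x |-> gamma_i(x + a) - gamma_i(x) from being constant on the
   >= 2^(m-1) points x with gamma_i(x) in the i-th slice of U; this yields a
   nonzero y in the i-th slice of W1.  Counting the differences
   gamma_i(x + x0) - gamma_i(x) with gamma_i(x0) = y then shows that this slice
   has dimension >= m - r, and strong anti-invariance of gamma_i, which maps
   the i-th slice of W onto that of W1, forces the slice of W to be all of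
   V_i.  Hence W is a sum of S-box spaces V_i, gamma permutes its cosets, and
   LA_U(W1|W2) = L(W), so W1 = W2 = W; non-triviality makes the index set
   nonempty and proper. *)

From HB Require Import structures.
From mathcomp Require Import all_boot all_order all_algebra.
From mathcomp Require Import perm finfield zify.
Set Implicit Arguments. Unset Strict Implicit. Unset Printing Implicit Defensive.
Import GRing.Theory.
Local Open Scope ring_scope.

Lemma oppr_F2 (V : lmodType 'F_2) (v : V) : - v = v.
Proof. by rewrite -scaleN1r (oppr_pchar2 (pchar_Fp (isT : prime 2))) scale1r. Qed.

Lemma card_rvset m (X : {vspace sbox m}) : #|rvset X| = (2 ^ \dim X)%N.
Proof. by rewrite cardsE card_vspace card_Fp. Qed.

Lemma leq_dimv_lpreim (K : fieldType) (aT rT : vectType K) (f : 'Hom(aT, rT))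
    (W : {vspace rT}) :
  (\dim W + \dim {:aT} <= \dim (f @^-1: W) + \dim {:rT})%N.
Proof.
have kerW : (lker f <= f @^-1: W)%VS by rewrite -lpreim0 lpreimS ?sub0v.
have dim_preim : (\dim (lker f) + \dim (W :&: limg f) = \dim (f @^-1: W))%N.
  rewrite -(limg_ker_dim f (f @^-1: W)) (capv_idPr kerW).
  by rewrite -lpreim_cap_limg lpreimK ?capvSr.
have dim_full : (\dim (lker f) + \dim (limg f) = \dim {:aT})%N.
  by rewrite -(limg_ker_dim f fullv) capfv.
have := dimv_sum_cap W (limg f); have := dimvS (subvf (W + limg f)); lia.
Qed.

Section Cosets.
Variables b m : nat.
Implicit Types (W : {vspace 'M['F_2]_(b, m)}) (v x : 'M['F_2]_(b, m)).

Lemma mem_coset W v x : (x \in coset W v) = (x - v \in W).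
Proof.
apply/imsetP/idP => [[y] | xvW]; first by rewrite inE => yW ->; rewrite addrK.
by exists (x - v); rewrite ?inE ?subrK.
Qed.

Lemma coset_refl W v : v \in coset W v.
Proof. by rewrite mem_coset subrr mem0v. Qed.

Lemma coset_id W v : v \in W -> coset W v = svset W.
Proof. by move=> vW; apply/setP => x; rewrite mem_coset inE rpredBr. Qed.

Lemma coset_inj W W' v v' : coset W v = coset W' v' -> W = W'.
Proof.
move=> eqWW'; have vW' : v - v' \in W' by rewrite -mem_coset -eqWW' coset_refl.
apply/vspaceP => x; rewrite -[x in LHS](addrK v) -mem_coset eqWW' mem_coset.
by rewrite -addrA rpredDr.
Qed.

End Cosets.

Section ImageOfLinearPartition.
Variables (b m : nat) (f : 'M['F_2]_(b, m) -> 'M['F_2]_(b, m)).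
Variables (W U W1 W2 : {vspace 'M['F_2]_(b, m)}) (vbar : 'M['F_2]_(b, m)).
Hypotheses (sW2U : (W2 <= U)%VS) (vbarNU : vbar \notin U).
Hypothesis f_onto : maps_onto f (linpart W) (LApart U W1 W2 vbar).

Lemma LApart_image_coset v : f v \in U -> exists u, f @: coset W v = coset W1 u.
Proof.
move=> fvU; have : f @: coset W v \in LApart U W1 W2 vbar.
  by rewrite -f_onto; apply/imset_f; apply/imset_f.
case/setUP => /imsetP [u]; rewrite inE => uU fWv; first by exists u.
have : f v - (vbar + u) \in W2 by rewrite -mem_coset -fWv imset_f ?coset_refl.
move=> /(subvP sW2U) fv_vbar_uU; case/negP: vbarNU.
by rewrite -(rpredBl vbar fvU) -(rpredBr (f v - vbar) uU) -addrA -opprD.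
Qed.

Lemma LApart_image_subr v w : f v \in U -> w \in W -> f (v + w) - f v \in W1.
Proof.
move=> fvU wW; have [u fWv] := LApart_image_coset fvU.
have fvW1 : f v - u \in W1 by rewrite -mem_coset -fWv imset_f ?coset_refl.
have fvwW1 : f (v + w) - u \in W1.
  by rewrite -mem_coset -fWv imset_f // mem_coset addrAC subrr add0r.
by have := memvB fvwW1 fvW1; rewrite opprB addrA subrK.
Qed.

Lemma LApart_image_space : f 0 = 0 -> f @: svset W = svset W1.
Proof.
move=> f0; have [|u fW] := @LApart_image_coset 0; first by rewrite f0 mem0v.
have uW1 : u \in W1.
  by rewrite -rpredN -sub0r -mem_coset -f0 -fW imset_f ?coset_refl.
by rewrite -(coset_id (mem0v W)) fW coset_id.
Qed.

End ImageOfLinearPartition.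

Section ParallelMaps.
Variables b m : nat.
Implicit Types (g : 'I_b -> {perm sbox m}) (v w : 'M['F_2]_(b, m)) (x y : sbox m).

Definition emb (i : 'I_b) : 'Hom(sbox m, 'M['F_2]_(b, m)) :=
  linfun (mulmx (delta_mx i (0 : 'I_1))).

Lemma row_emb i j x : row j (emb i x) = if j == i then x else 0.
Proof.
apply/rowP => k; rewrite lfunE !mxE big_ord1 !mxE eqxx andbT.
by case: eqP => _; rewrite ?mul1r ?mul0r // mxE.
Qed.

Lemma sum_row_emb v : \sum_i emb i (row i v) = v.
Proof.
apply/row_matrixP => j; rewrite raddf_sum (bigD1 j) //= row_emb eqxx.
by rewrite big1 ?addr0 // => i; rewrite row_emb eq_sym => /negbTE ->.
Qed.

Lemma row_parallel g v i : row i (parallel g v) = g i (row i v).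
Proof. exact: rowK. Qed.

Lemma parallel_sbox0 g : parallel g 0 = 0 -> forall i, g i 0 = 0.
Proof. by move=> g0 i; have := congr1 (row i) g0; rewrite row_parallel !row0. Qed.

Definition parallel_inv g := parallel (fun i => (g i)^-1%g).

Lemma parallelK g : cancel (parallel g) (parallel_inv g).
Proof. by move=> v; apply/row_matrixP => i; rewrite !row_parallel permK. Qed.

Lemma parallelKV g : cancel (parallel_inv g) (parallel g).
Proof. by move=> v; apply/row_matrixP => i; rewrite !row_parallel permKV. Qed.

Section ZeroPreserving.
Variable g : 'I_b -> {perm sbox m}.
Hypothesis g0 : forall i, g i 0 = 0.

Lemma parallel_emb i x : parallel g (emb i x) = emb i (g i x).
Proof.
apply/row_matrixP => j; rewrite row_parallel !row_emb.
by case: eqP => [-> | _]; rewrite ?g0.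
Qed.

Lemma parallel_eq_emb v i y : parallel g v = emb i y -> v = emb i ((g i)^-1%g y).
Proof.
move=> /(congr1 (parallel_inv g)); rewrite parallelK => ->.
apply/row_matrixP => j; rewrite row_parallel !row_emb.
by case: eqP => [-> // | _]; rewrite -{1}(g0 j) permK.
Qed.

Lemma parallel_emb_shift i x w :
  parallel g (emb i x + w) - parallel g (emb i x) - parallel g w =
  emb i (g i (x + row i w) - g i x - g i (row i w)).
Proof.
apply/row_matrixP => j; rewrite !raddfB /= !row_parallel raddfD /= !row_emb.
by case: eqP => [-> // | _]; rewrite add0r g0 !subr0 subrr.
Qed.

End ZeroPreserving.

Definition slice i (U : {vspace 'M['F_2]_(b, m)}) : {vspace sbox m} :=
  (emb i @^-1: U)%VS.

Lemma mem_slice i U x : (x \in slice i U) = (emb i x \in U).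
Proof. by rewrite -memv_preim. Qed.

Lemma dim_slice i U : \dim U = (m * b)%N.-1 -> (m.-1 <= \dim (slice i U))%N.
Proof.
move=> dimU; change (m.-1 <= \dim (emb i @^-1: U))%N.
by have := leq_dimv_lpreim (emb i) U; rewrite dimU !dimvf /dim /=; lia.
Qed.

End ParallelMaps.

Arguments emb {b m} i.

Section DifferentialUniformity.
Variables (m delta : nat) (f : sbox m -> sbox m) (a : sbox m).
Hypotheses (f_du : diff_uniform f delta) (a_neq0 : a != 0).

Lemma diff_count_le c : (diff_count f a c <= delta)%N.
Proof. by rewrite f_du; apply: (bigmax_sup a) => //; apply: leq_bigmax. Qed.

Lemma diff_neq_on_large_set c (S : {set sbox m}) :
  (delta < #|S|)%N -> exists2 x, x \in S & f (x + a) + f x != c.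
Proof.
move=> delta_lt; apply/exists_inP; rewrite -negb_forall_in; apply/negP.
move=> /forall_inP diffS; have S_le : (#|S| <= diff_count f a c)%N.
  by apply: subset_leq_card; apply/subsetP => x /diffS; rewrite inE.
by have := leq_trans S_le (diff_count_le c); rewrite leqNgt delta_lt.
Qed.

Lemma card_le_diff_image (S Y : {set sbox m}) :
  {in S, forall x, f (x + a) + f x \in Y} -> (#|S| <= #|Y| * delta)%N.
Proof.
move=> DSY; rewrite -sum1_card (partition_big (fun x => f (x + a) + f x) (mem Y)) //=.
rewrite -sum_nat_const; apply: leq_sum => c _; rewrite sum1dep_card.
apply: leq_trans (diff_count_le c); apply: subset_leq_card.
by apply/subsetP => x; rewrite !inE => /andP [_ ->].
Qed.

End DifferentialUniformity.

Definition coordinate b m (W : {vspace 'M['F_2]_(b, m)}) (I : {set 'I_b}) : Prop :=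
  forall v, (v \in W) = [forall i, (i \notin I) ==> (row i v == 0)].

Section CoordinatesOfW.
Variables (b m r : nat) (g : 'I_b -> {perm sbox m}).
Variables (W U W1 W2 : {vspace 'M['F_2]_(b, m)}) (vbar : 'M['F_2]_(b, m)).
Hypotheses (gamma0 : parallel g 0 = 0) (r_lt : (r < m.-1)%N).
Hypotheses (g_du : forall i, diff_uniform (g i) (2 ^ r)).
Hypotheses (g_sai : forall i, strongly_anti_invariant (g i) r).
Hypotheses (dimU : \dim U = (m * b)%N.-1) (sW2U : (W2 <= U)%VS) (vbarNU : vbar \notin U).
Hypothesis g_onto : maps_onto (parallel g) (linpart W) (LApart U W1 W2 vbar).

Let g0 := parallel_sbox0 gamma0.

Lemma parallel_image_space : parallel g @: svset W = svset W1.
Proof. exact: LApart_image_space sW2U vbarNU g_onto gamma0. Qed.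

Lemma parallel_image_subr v w :
  parallel g v \in U -> w \in W -> parallel g (v + w) - parallel g v \in W1.
Proof. by move=> gvU wW; apply: (LApart_image_subr sW2U vbarNU g_onto). Qed.

Lemma parallel_image_mem w : w \in W -> parallel g w \in W1.
Proof.
move=> wW; have : parallel g w \in parallel g @: svset W by rewrite imset_f ?inE.
by rewrite parallel_image_space inE.
Qed.

Lemma sbox_image_slice i : g i @: rvset (slice i W) = rvset (slice i W1).
Proof.
apply/setP => y; rewrite inE mem_slice; apply/imsetP/idP => [[x] | yW1].
  by rewrite inE mem_slice => /parallel_image_mem; rewrite parallel_emb // => ? ->.
have : emb i y \in svset W1 by rewrite inE.
rewrite -parallel_image_space => /imsetP [z]; rewrite inE => zW /esym /parallel_eq_emb.
move=> /(_ g0) ez; exists ((g i)^-1%g y); last by rewrite permKV.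
by rewrite inE mem_slice -ez.
Qed.

Let toU i := [set x | emb i (g i x) \in U].

Lemma card_toU i : (2 ^ m.-1 <= #|toU i|)%N.
Proof.
have -> : #|toU i| = #|rvset (slice i U)|.
  rewrite -(card_imset _ (@perm_inj _ (g i))); apply: eq_card => y.
  rewrite inE mem_slice; apply/imsetP/idP => [[x] | yU].
    by rewrite inE => ? ->.
  by exists ((g i)^-1%g y); rewrite ?inE permKV.
by rewrite card_rvset leq_exp2l // dim_slice.
Qed.

Lemma parallel_toU i x : x \in toU i -> parallel g (emb i x) \in U.
Proof. by rewrite inE parallel_emb. Qed.

Lemma slice_W1_neq0 i w :
  w \in W -> row i w != 0 -> exists2 y, y != 0 & emb i y \in W1.
Proof.
move=> wW wi0; set a := row i w.
have [|x xU Dx] := diff_neq_on_large_set (g_du i) wi0 (g i a) (S := toU i).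
  by apply: leq_trans (card_toU i); rewrite ltn_exp2l.
exists (g i (x + a) - g i x - g i a); first by rewrite subr_eq0 oppr_F2.
rewrite -parallel_emb_shift //.
by rewrite memvB ?parallel_image_subr ?parallel_toU ?parallel_image_mem.
Qed.

Lemma dim_slice_W1 i y :
  y != 0 -> emb i y \in W1 -> (m - r <= \dim (slice i W1))%N.
Proof.
move=> y0 yW1; have : y \in rvset (slice i W1) by rewrite inE mem_slice.
rewrite -sbox_image_slice => /imsetP [x0]; rewrite inE mem_slice => x0W y_def.
have x00 : x0 != 0 by apply: contraNneq y0 => x00; rewrite y_def x00 g0.
have D_slice : {in toU i, forall x, g i (x + x0) + g i x \in rvset (slice i W1) :\ 0}.
  move=> x xU; rewrite !inE mem_slice -[g i x]oppr_F2 subr_eq0; apply/andP; split.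
    by apply: contra x00 => /eqP /perm_inj /eqP; rewrite -subr_eq0 addrAC subrr add0r.
  rewrite raddfB /= -!parallel_emb // raddfD /=.
  by rewrite parallel_image_subr ?parallel_toU.
have := leq_trans (card_toU i) (card_le_diff_image (g_du i) x00 D_slice).
rewrite [#|_ :\ 0|](_ : _ = (2 ^ \dim (slice i W1)).-1); last first.
  by rewrite -card_rvset (cardsD1 0 (rvset _)) inE mem0v.
set d := \dim _ => le_card.
have lt_pow : ((2 ^ d).-1 * 2 ^ r < 2 ^ (d + r))%N.
  by rewrite expnD ltn_pmul2r ?expn_gt0 // ltn_predL expn_gt0.
by have := leq_ltn_trans le_card lt_pow; rewrite ltn_exp2l //; lia.
Qed.

Lemma slice_full i w : w \in W -> row i w != 0 -> slice i W = fullv.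
Proof.
move=> wW wi0; have [y y0 yW1] := slice_W1_neq0 wW wi0.
have [_ _ _ g_sai_i] := g_sai i.
case: (g_sai_i _ _ (sbox_image_slice i)) => [[_ small] | [-> //]].
by have := dim_slice_W1 y0 yW1; rewrite leqNgt small.
Qed.

Lemma coordinate_support :
  coordinate W [set i | [exists w, (w \in W) && (row i w != 0)]].
Proof.
move=> v; apply/idP/forallP => [vW i | v_supp].
  by apply/implyP; rewrite inE negb_exists => /forallP /(_ v); rewrite vW negbK.
rewrite -[v]sum_row_emb; apply: memv_suml => i _; have /implyP := v_supp i.
case: (boolP (i \in _)) => [| _ /(_ isT) /eqP ->]; last by rewrite linear0 mem0v.
rewrite inE => /existsP [w /andP [wW wi0]] _.
by rewrite -mem_slice (slice_full wW wi0) memvf.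
Qed.

End CoordinatesOfW.

Section CoordinateSubspaces.
Variables (b m : nat) (W : {vspace 'M['F_2]_(b, m)}) (I : {set 'I_b}).
Hypothesis WI : coordinate W I.
Implicit Type g : 'I_b -> {perm sbox m}.

Lemma mem_coset_coordinate v x :
  (x \in coset W v) = [forall (i | i \notin I), row i x == row i v].
Proof. by rewrite mem_coset WI; apply: eq_forallb => i; rewrite raddfB /= subr_eq0. Qed.

Lemma parallel_coset g v : parallel g @: coset W v = coset W (parallel g v).
Proof.
apply/setP => y; rewrite mem_coset_coordinate; apply/imsetP/forall_inP => [[z] | yv].
  rewrite mem_coset_coordinate => /forall_inP zv -> i /zv.
  by rewrite !row_parallel => /eqP ->.
exists (parallel_inv g y); last by rewrite parallelKV.
rewrite mem_coset_coordinate; apply/forall_inP => i /yv.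
by rewrite !row_parallel => /eqP ->; rewrite permK.
Qed.

Lemma parallel_maps_linpart g : maps_onto (parallel g) (linpart W) (linpart W).
Proof.
apply/setP => B; apply/imsetP/imsetP => [[_ /imsetP [v _ ->] ->] | [v _ ->]].
  by exists (parallel g v); rewrite ?parallel_coset.
exists (coset W (parallel_inv g v)); first exact: imset_f.
by rewrite parallel_coset parallelKV.
Qed.

Lemma linpart_coordinate0 : I = set0 -> linpart W = [set [set x] | x : 'M_(b, m)].
Proof.
move=> I0; apply: eq_imset => v; apply/setP => x; rewrite mem_coset_coordinate inE.
apply/forall_inP/eqP => [rowsE | -> //].
by apply/row_matrixP => i; apply/eqP/rowsE; rewrite I0 inE.
Qed.

Lemma linpart_coordinateT : I = setT -> linpart W = [set setT].
Proof.
move=> IT; have cosetT v : coset W v = setT.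
  apply/setP => x; rewrite mem_coset_coordinate inE.
  by apply/forall_inP => i; rewrite IT inE.
apply/setP => B; rewrite inE; apply/imsetP/eqP => [[v _ ->] | ->]; first exact: cosetT.
by exists 0; rewrite ?cosetT.
Qed.

End CoordinateSubspaces.

Theorem lemma3p8 (m b r : nat) (g : 'I_b -> {perm sbox m})
  (W U W1 W2 : {vspace 'M['F_2]_(b, m)}) (vbar : 'M['F_2]_(b, m)) :
  (1 < m)%N -> (1 < b)%N ->
  parallel g 0 = 0 ->
  (r < m.-1)%N ->
  (forall i, diff_uniform (g i) (2 ^ r)) ->
  (forall i, strongly_anti_invariant (g i) r) ->
  \dim U = (m * b).-1 -> (W1 <= U)%VS -> (W2 <= U)%VS -> vbar \notin U ->
  ~ trivial_partition (LApart U W1 W2 vbar) ->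
  maps_onto (parallel g) (linpart W) (LApart U W1 W2 vbar) ->
  [/\ wall W, wall W1, wall W2, W = W1 & W1 = W2]
  /\ LApart U W1 W2 vbar = linpart W1.
Proof.
move=> _ _ gamma0 r_lt g_du g_sai dimU _ sW2U vbarNU nontrivial g_onto.
have [I WI] : exists I, coordinate W I.
  by eexists; apply: coordinate_support gamma0 r_lt g_du g_sai dimU sW2U vbarNU g_onto.
have W1W : W1 = W.
  apply/esym/(@coset_inj _ _ _ _ 0 0); rewrite !coset_id ?mem0v //.
  rewrite -(LApart_image_space sW2U vbarNU g_onto gamma0) -(coset_id (mem0v W)).
  by rewrite (parallel_coset WI) gamma0.
have LA_W : LApart U W1 W2 vbar = linpart W.
  by rewrite -g_onto; apply: parallel_maps_linpart.
have W2W : W2 = W.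
  have : coset W2 (vbar + 0) \in linpart W.
    by rewrite -LA_W; apply/setUP; right; apply: imset_f; rewrite inE mem0v.
  by case/imsetP => v _ /coset_inj.
have wallW : wall W.
  exists I; split=> //; apply/eqP => I_triv; apply: nontrivial; rewrite LA_W.
    by left; apply: linpart_coordinate0 WI I_triv.
  by right; apply: linpart_coordinateT WI I_triv.
by rewrite LA_W W1W W2W.
Qed.
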